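(* Let $G$ be a group and $N$ a normal subgroup of $G$. If $S=\bigoplus_{g\in G}S_g$ is a nearly epsilon-strongly $G$-graded ring, then the induced $G/N$-grading $\{S_C\}_{C\in G/N}$ is nearly epsilon-strong.
   Context: Rings are associative, not necessarily unital; $AB$ denotes finite sums of products. A $G$-grading: $S=\bigoplus_gS_g$, $S_gS_h\subseteq S_{gh}$. A grading $\{T_h\}_{h\in H}$ is nearly epsilon-strong if $T_hT_{h^{-1}}T_h=T_h$ for all $h$ and each ring $T_hT_{h^{-1}}$ is $s$-unital (every $x$ in a ring $R$ satisfies $x\in xR\cap Rx$); equivalently, for each $h$ and $t\in T_h$ there are $\epsilon\in T_hT_{h^{-1}}$, $\epsilon'\in T_{h^{-1}}T_h$ with $\epsilon t=t=t\epsilon'$. Induced grading: $S_C=\bigoplus_{g\in C}S_g$. *)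

From HB Require Import structures.
From mathcomp Require Import all_boot all_algebra.
From mathcomp Require Import monoid.
From Stdlib Require List.
Set Implicit Arguments.
Unset Strict Implicit.
Unset Printing Implicit Defensive.
Import GRing.Theory.

Local Open Scope ring_scope.

Definition is_nonunital_ring (S : zmodType) (m : S -> S -> S) : Prop :=
  [/\ (forall x y z, m x (m y z) = m (m x y) z),
      (forall x y z, m x (y + z) = m x y + m x z) &
      (forall x y z, m (x + y) z = m x z + m y z)].

Definition set_eq (S : Type) (A B : S -> Prop) : Prop := forall x, A x <-> B x.

Definition setmul (S : zmodType) (m : S -> S -> S) (A B : S -> Prop) : S -> Prop :=
  fun x => exists l : seq (S * S),
    (forall p, List.In p l -> A p.1 /\ B p.2) /\
    x = \sum_(p <- l) m p.1 p.2.

Definition s_unital (S : zmodType) (m : S -> S -> S) (R : S -> Prop) : Prop :=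
  forall x, R x -> (exists r, R r /\ x = m x r) /\ (exists r, R r /\ x = m r x).

Definition is_add_subgroup (S : zmodType) (A : S -> Prop) : Prop :=
  A 0 /\ (forall x y, A x -> A y -> A (x - y)).

Definition is_grading (G : groupType) (S : zmodType) (m : S -> S -> S)
    (T : G -> S -> Prop) : Prop :=
  [/\ (forall g, is_add_subgroup (T g)),
      (forall g h a b, T g a -> T h b -> T (mul g h) (m a b)),
      (forall x, exists l : seq (G * S),
          (forall p, List.In p l -> T p.1 p.2) /\ x = \sum_(p <- l) p.2) &
      (forall l : seq (G * S), List.NoDup (map fst l) ->
          (forall p, List.In p l -> T p.1 p.2) ->
          \sum_(p <- l) p.2 = 0 -> forall p, List.In p l -> p.2 = 0)].

Definition nearly_eps_strong_family (I : Type) (inv_i : I -> I)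
    (S : zmodType) (m : S -> S -> S) (T : I -> S -> Prop) : Prop :=
  forall h,
    set_eq (setmul m (setmul m (T h) (T (inv_i h))) (T h)) (T h) /\
    s_unital m (setmul m (T h) (T (inv_i h))).

Definition nearly_eps_strong (G : groupType) (S : zmodType) (m : S -> S -> S)
    (T : G -> S -> Prop) : Prop :=
  is_grading m T /\ nearly_eps_strong_family (@inv G) m T.

Definition is_normal_subgroup (G : groupType) (N : G -> Prop) : Prop :=
  [/\ N one,
      (forall x y, N x -> N y -> N (mul x y)),
      (forall x, N x -> N (inv x)) &
      (forall g n, N n -> N (mul (mul g n) (inv g)))].

(** Induced grading: for the coset C = g N, S_C = (+)_{k in gN} S_k, i.e. the
    finite sums of homogeneous elements of degrees k with g^-1 k in N. *)
Definition induced_component (G : groupType) (S : zmodType)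
    (T : G -> S -> Prop) (N : G -> Prop) (g : G) : S -> Prop :=
  fun x => exists l : seq (G * S),
    (forall p, List.In p l -> N (mul (inv g) p.1) /\ T p.1 p.2) /\
    x = \sum_(p <- l) p.2.

From mathcomp Require Import all_boot all_algebra.
From mathcomp Require Import monoid.
From Stdlib Require List.
Set Implicit Arguments.
Unset Strict Implicit.
Unset Printing Implicit Defensive.
Import GRing.Theory.
Local Open Scope ring_scope.

(* Write S_C for the component of the coset C = gN.  As N is normal,
   S_C S_D lies in S_{CD}, so S_C S_{C^-1} S_C lies in S_C; conversely a
   homogeneous s in S_k with k in C lies in S_k S_{k^-1} S_k, hence in
   S_C S_{C^-1} S_C.
   An element x of S_C S_{C^-1} is a finite sum of products a z, and also of
   products z a, with each z in some S_k S_{k^-1}, k in C.  Each such z has a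
   right and a left unit in S_k S_{k^-1}, a subset of the intersection E of
   S_C S_{C^-1} and S_1.  Tominaga's argument gives the finitely many z's a
   common unit in E, since their class is stable under z |-> z - z e for e in
   E (a subset of S_1) and E is closed under (e, f) |-> e + f - e f; that
   common unit is a unit of x. *)

Section NonunitalRing.
Variables (S : zmodType) (m : S -> S -> S).
Hypothesis ringS : is_nonunital_ring m.

Lemma mulmA x y z : m x (m y z) = m (m x y) z. Proof. by case: ringS. Qed.
Lemma mulmDr x y z : m x (y + z) = m x y + m x z. Proof. by case: ringS. Qed.
Lemma mulmDl x y z : m (x + y) z = m x z + m y z. Proof. by case: ringS. Qed.

Lemma mulm0 x : m x 0 = 0.
Proof. by apply: (@addrI _ (m x 0)); rewrite -mulmDr !addr0. Qed.

Lemma mul0m x : m 0 x = 0.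
Proof. by apply: (@addrI _ (m 0 x)); rewrite -mulmDl !addr0. Qed.

Lemma mulmN x y : m x (- y) = - m x y.
Proof. by apply/eqP; rewrite -addr_eq0 -mulmDr addNr mulm0. Qed.

Lemma mulNm x y : m (- x) y = - m x y.
Proof. by apply/eqP; rewrite -addr_eq0 -mulmDl addNr mul0m. Qed.

Lemma mulmBr x y z : m x (y - z) = m x y - m x z.
Proof. by rewrite mulmDr mulmN. Qed.

Lemma mulmBl x y z : m (x - y) z = m x z - m y z.
Proof. by rewrite mulmDl mulNm. Qed.

Lemma common_right_unit (E P : S -> Prop) :
  E 0 ->
  (forall e f, E e -> E f -> E (e + f - m e f)) ->
  (forall y e, P y -> E e -> P (y - m y e)) ->
  (forall y, P y -> exists2 e, E e & m y e = y) ->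
  forall zs, (forall z, List.In z zs -> P z) ->
  exists2 e, E e & forall z, List.In z zs -> m z e = z.
Proof.
move=> E0 E_circle P_sub P_unit; elim=> [|z zs IH] zsP; first by exists 0.
have [f Ef f_unit] := IH (fun w w_zs => zsP w (or_intror w_zs)).
have [e Ee e_unit] := P_unit _ (P_sub _ _ (zsP z (or_introl erefl)) Ef).
exists (f + e - m f e); first exact: E_circle.
move=> w [<- | w_zs].
  by rewrite mulmBr mulmDr mulmA -addrA -mulmBl e_unit addrC subrK.
by rewrite mulmBr mulmDr mulmA (f_unit _ w_zs) addrK.
Qed.

End NonunitalRing.

Lemma nonunital_ring_op (S : zmodType) (m : S -> S -> S) :
  is_nonunital_ring m -> is_nonunital_ring (fun a b => m b a).
Proof. by case=> mA mDr mDl; split=> *; rewrite ?mA ?mDr ?mDl. Qed.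

Lemma common_left_unit (S : zmodType) (m : S -> S -> S) (E P : S -> Prop) :
  is_nonunital_ring m ->
  E 0 ->
  (forall e f, E e -> E f -> E (e + f - m f e)) ->
  (forall y e, P y -> E e -> P (y - m e y)) ->
  (forall y, P y -> exists2 e, E e & m e y = y) ->
  forall zs, (forall z, List.In z zs -> P z) ->
  exists2 e, E e & forall z, List.In z zs -> m e z = z.
Proof. by move/nonunital_ring_op/common_right_unit; apply. Qed.

Section SetProduct.
Variables (S : zmodType) (m : S -> S -> S).
Implicit Types A B C P Q : S -> Prop.

Lemma big_ind_In (X : Type) Q (F : X -> S) (l : seq X) :
  Q 0 -> (forall x y, Q x -> Q y -> Q (x + y)) ->
  (forall p, List.In p l -> Q (F p)) -> Q (\sum_(p <- l) F p).
Proof.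
move=> Q0 QD; elim: l => [|p l IH] lQ; first by rewrite big_nil.
by rewrite big_cons; apply: QD; [apply: lQ; left | apply: IH => q ?; apply: lQ; right].
Qed.

Lemma setmul_ind A B Q :
  Q 0 -> (forall x y, Q x -> Q y -> Q (x + y)) ->
  (forall a b, A a -> B b -> Q (m a b)) ->
  forall x, setmul m A B x -> Q x.
Proof.
move=> Q0 QD QM x [l [lAB ->]]; apply: big_ind_In => // p lp.
by have [] := lAB p lp; apply: QM.
Qed.

Lemma setmul0 A B : setmul m A B 0.
Proof. by exists [::]; rewrite big_nil. Qed.

Lemma setmulD A B x y :
  setmul m A B x -> setmul m A B y -> setmul m A B (x + y).
Proof.
move=> [l1 [l1AB ->]] [l2 [l2AB ->]]; exists (l1 ++ l2); rewrite big_cat.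
by split=> // p /(List.in_app_or _ _ _)[/l1AB | /l2AB].
Qed.

Lemma setmul_mul A B a b : A a -> B b -> setmul m A B (m a b).
Proof.
move=> Aa Bb; exists [:: (a, b)]; rewrite big_seq1.
by split=> // p [<- | []].
Qed.

Lemma setmul_mono A B A' B' :
  (forall a, A a -> A' a) -> (forall b, B b -> B' b) ->
  forall x, setmul m A B x -> setmul m A' B' x.
Proof.
move=> AA' BB'; apply: setmul_ind; [exact: setmul0 | exact: setmulD |].
by move=> a b /AA' Aa /BB' Bb; apply: setmul_mul.
Qed.

Hypothesis ringS : is_nonunital_ring m.

Lemma setmulN A B x : (forall a, A a -> A (- a)) ->
  setmul m A B x -> setmul m A B (- x).
Proof.
move=> AN; move: x; apply: setmul_ind; first by rewrite oppr0; apply: setmul0.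
  by move=> x y Nx Ny; rewrite opprD; apply: setmulD.
by move=> a b Aa Bb; rewrite -mulNm //; apply: setmul_mul => //; apply: AN.
Qed.

Lemma setmulB A B x y : (forall a, A a -> A (- a)) ->
  setmul m A B x -> setmul m A B y -> setmul m A B (x - y).
Proof. by move=> AN Px Py; apply: setmulD => //; apply: setmulN. Qed.

Lemma setmul_mulr_closed A B C e c :
  (forall b f, B b -> C f -> B (m b f)) ->
  setmul m A B e -> C c -> setmul m A B (m e c).
Proof.
move=> BC + Cc; move: e; apply: setmul_ind.
- by rewrite mul0m //; apply: setmul0.
- by move=> x y ? ?; rewrite mulmDl //; apply: setmulD.
- by move=> a b Aa Bb; rewrite -mulmA //; apply: setmul_mul => //; apply: BC.
Qed.

Lemma setmul_mull_closed A B C e c :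
  (forall a f, A a -> C f -> A (m f a)) ->
  setmul m A B e -> C c -> setmul m A B (m c e).
Proof.
move=> AC + Cc; move: e; apply: setmul_ind.
- by rewrite mulm0 //; apply: setmul0.
- by move=> x y ? ?; rewrite mulmDr //; apply: setmulD.
- by move=> a b Aa Bb; rewrite mulmA //; apply: setmul_mul => //; apply: AC.
Qed.

Lemma setmulA_sub A B C x :
  setmul m (setmul m A B) C x -> setmul m A (setmul m B C) x.
Proof.
move: x; apply: setmul_ind; [exact: setmul0 | exact: setmulD |].
move=> y c + Cc; move: y; apply: setmul_ind.
- by rewrite mul0m //; apply: setmul0.
- by move=> x y ? ?; rewrite mulmDl //; apply: setmulD.
- by move=> a b Aa Bb; rewrite -mulmA //; apply: setmul_mul => //; apply: setmul_mul.
Qed.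

Lemma setmul_right_unit A P E x :
  (forall zs, (forall z, List.In z zs -> P z) ->
     exists2 e, E e & forall z, List.In z zs -> m z e = z) ->
  setmul m A P x -> exists2 e, E e & m x e = x.
Proof.
move=> common_unit [l [lAP def_x]].
have [e Ee e_unit] : exists2 e, E e & forall z, List.In z (map snd l) -> m z e = z.
  by apply: common_unit => z /(List.in_map_iff _ _ _)[p [<- lp]]; apply: (lAP p lp).2.
exists e => //; have {def_x} : setmul m A (fun z => m z e = z) x.
  exists l; split=> // p lp; split; first exact: (lAP p lp).1.
  exact/e_unit/(List.in_map _ _ _ lp).
move: x; apply: setmul_ind; first by rewrite mul0m.
  by move=> y z yK zK; rewrite mulmDl // yK zK.
by move=> a z _ zK; rewrite -mulmA // zK.
Qed.

Lemma setmul_left_unit P A E x :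
  (forall zs, (forall z, List.In z zs -> P z) ->
     exists2 e, E e & forall z, List.In z zs -> m e z = z) ->
  setmul m P A x -> exists2 e, E e & m e x = x.
Proof.
move=> common_unit [l [lPA def_x]].
have [e Ee e_unit] : exists2 e, E e & forall z, List.In z (map fst l) -> m e z = z.
  by apply: common_unit => z /(List.in_map_iff _ _ _)[p [<- lp]]; apply: (lPA p lp).1.
exists e => //; have {def_x} : setmul m (fun z => m e z = z) A x.
  exists l; split=> // p lp; split; last exact: (lPA p lp).2.
  exact/e_unit/(List.in_map _ _ _ lp).
move: x; apply: setmul_ind; first by rewrite mulm0.
  by move=> y z yK zK; rewrite mulmDr // yK zK.
by move=> z a zK _; rewrite mulmA // zK.
Qed.

End SetProduct.

Section InducedGrading.
Variables (G : groupType) (N : G -> Prop).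
Variables (S : zmodType) (m : S -> S -> S) (T : G -> S -> Prop).
Hypotheses (ringS : is_nonunital_ring m) (normalN : is_normal_subgroup N).
Hypothesis gradedT : is_grading m T.

Local Notation U := (induced_component T N).

Lemma coset_mul g h k l :
  N (g^-1 * k)%g -> N (h^-1 * l)%g -> N ((g * h)^-1 * (k * l))%g.
Proof.
case: normalN => _ NM _ NJ gk hl.
have gkJ : N (h^-1 * (g^-1 * k) * h)%g by have := NJ h^-1%g _ gk; rewrite invgK.
by have := NM _ _ gkJ hl; rewrite invgM !mulgA mulgK.
Qed.

Lemma coset_inv g k : N (g^-1 * k)%g -> N (g^-1^-1 * k^-1)%g.
Proof.
case: normalN => _ _ NV NJ gk.
by have := NJ g _ (NV _ gk); rewrite invgK invgM invgK !mulgA mulgK.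
Qed.

Lemma homog0 k : T k 0.
Proof. by case: gradedT => /(_ k)[]. Qed.

Lemma homogB k x y : T k x -> T k y -> T k (x - y).
Proof. by case: gradedT => /(_ k)[_ TB] *; apply: TB. Qed.

Lemma homogN k x : T k x -> T k (- x).
Proof. by rewrite -sub0r; apply/homogB/homog0. Qed.

Lemma homogD k x y : T k x -> T k y -> T k (x + y).
Proof. by move=> Tx /homogN Ty; rewrite -[y]opprK; apply: homogB. Qed.

Lemma homogM k l x y : T k x -> T l y -> T (k * l)%g (m x y).
Proof. by case: gradedT => _ TM _ _; apply: TM. Qed.

Lemma induced_ind g (Q : S -> Prop) :
  Q 0 -> (forall x y, Q x -> Q y -> Q (x + y)) ->
  (forall k t, N (g^-1 * k)%g -> T k t -> Q t) ->
  forall x, U g x -> Q x.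
Proof.
move=> Q0 QD QT x [l [lT ->]]; apply: big_ind_In => // p lp.
by have [] := lT p lp; apply: QT.
Qed.

Lemma induced0 g : U g 0.
Proof. by exists [::]; rewrite big_nil. Qed.

Lemma inducedD g x y : U g x -> U g y -> U g (x + y).
Proof.
move=> [l1 [l1T ->]] [l2 [l2T ->]]; exists (l1 ++ l2); rewrite big_cat.
by split=> // p /(List.in_app_or _ _ _)[/l1T | /l2T].
Qed.

Lemma induced_homog g k t : N (g^-1 * k)%g -> T k t -> U g t.
Proof.
move=> gk Tt; exists [:: (k, t)]; rewrite big_seq1.
by split=> // p [<- | []].
Qed.

Lemma inducedN g x : U g x -> U g (- x).
Proof.
move: x; apply: induced_ind; first by rewrite oppr0; apply: induced0.
  by move=> x y Nx Ny; rewrite opprD; apply: inducedD.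
by move=> k t gk /homogN; apply: induced_homog.
Qed.

Lemma induced_mul g h x y : U g x -> U h y -> U (g * h)%g (m x y).
Proof.
move=> + Uy; move: x; apply: induced_ind => [|x x' ? ?|k t gk Tt].
- by rewrite mul0m //; apply: induced0.
- by rewrite mulmDl //; apply: inducedD.
- move: y Uy; apply: induced_ind => [|y y' ? ?|l u hl Tu].
  + by rewrite mulm0 //; apply: induced0.
  + by rewrite mulmDr //; apply: inducedD.
  + by apply: (induced_homog (coset_mul gk hl)); apply: homogM.
Qed.

Lemma setmul_induced_sub g h x : setmul m (U g) (U h) x -> U (g * h)%g x.
Proof.
move: x; apply: setmul_ind; [exact: induced0 | exact: inducedD |].
exact: induced_mul.
Qed.

Lemma setmul_homog_inv_sub k x : setmul m (T k) (T k^-1%g) x -> T 1%g x.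
Proof.
move: x; apply: setmul_ind; [exact: homog0 | exact: homogD |].
by move=> a b Ta Tb; rewrite -(mulgV k); apply: homogM.
Qed.

Hypothesis epsT : nearly_eps_strong_family (@inv G) m T.

Lemma homog_sub_triple k t :
  T k t -> setmul m (setmul m (T k) (T k^-1%g)) (T k) t.
Proof. exact: ((epsT k).1 t).2. Qed.

Lemma induced_triple_product g :
  set_eq (setmul m (setmul m (U g) (U g^-1%g)) (U g)) (U g).
Proof.
move=> x; split.
  have UgUg'_sub y : setmul m (U g) (U g^-1%g) y -> U 1%g y.
    by move/setmul_induced_sub; rewrite mulgV.
  by move/(setmul_mono UgUg'_sub (fun _ Ug => Ug))/setmul_induced_sub; rewrite mul1g.
move: x; apply: induced_ind; [exact: setmul0 | exact: setmulD |].
move=> k t gk /homog_sub_triple; apply: setmul_mono => [a|b]; last exact: induced_homog.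
by apply: setmul_mono => b; [exact: induced_homog | exact/induced_homog/coset_inv].
Qed.

Lemma induced_homog1 e : T 1%g e -> U 1%g e.
Proof.
by case: normalN => N1 _ _ _; apply: induced_homog; rewrite mulVg.
Qed.

Lemma induced_mulr_homog1 h x e : U h x -> T 1%g e -> U h (m x e).
Proof. by move=> Ux /induced_homog1/(induced_mul Ux); rewrite mulg1. Qed.

Lemma induced_mull_homog1 h x e : U h x -> T 1%g e -> U h (m e x).
Proof. by move=> Ux /induced_homog1/induced_mul/(_ Ux); rewrite mul1g. Qed.

Section Units.
Variable g : G.

Let prod_set := setmul m (U g) (U g^-1%g).
Let unit_set e := prod_set e /\ T 1%g e.
Let local_set z := exists2 k, N (g^-1 * k)%g & setmul m (T k) (T k^-1%g) z.

Lemma unit_set0 : unit_set 0.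
Proof. by split; [apply: setmul0 | apply: homog0]. Qed.

Lemma unit_set_circle_r e f : unit_set e -> unit_set f -> unit_set (e + f - m e f).
Proof.
move=> [Re Te] [Rf Tf]; split; last first.
  by apply: homogB; [apply: homogD | rewrite -(mulg1 1%g); apply: homogM].
apply: setmulB => //; [exact: inducedN | exact: setmulD |].
by apply: (setmul_mulr_closed ringS _ Re Tf) => b c; apply: induced_mulr_homog1.
Qed.

Lemma unit_set_circle_l e f : unit_set e -> unit_set f -> unit_set (e + f - m f e).
Proof.
move=> [Re Te] [Rf Tf]; split; last first.
  by apply: homogB; [apply: homogD | rewrite -(mulg1 1%g); apply: homogM].
apply: setmulB => //; [exact: inducedN | exact: setmulD |].
by apply: (setmul_mull_closed ringS _ Re Tf) => a c; apply: induced_mull_homog1.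
Qed.

Lemma local_set_subr z e : local_set z -> unit_set e -> local_set (z - m z e).
Proof.
move=> [k gk Pz] [_ Te]; exists k => //.
apply: setmulB => //; first exact: homogN.
apply: (setmul_mulr_closed ringS _ Pz Te) => b c Tb Tc.
by rewrite -[k^-1%g]mulg1; apply: homogM.
Qed.

Lemma local_set_subl z e : local_set z -> unit_set e -> local_set (z - m e z).
Proof.
move=> [k gk Pz] [_ Te]; exists k => //.
apply: setmulB => //; first exact: homogN.
apply: (setmul_mull_closed ringS _ Pz Te) => a c Ta Tc.
by rewrite -[k]mul1g; apply: homogM.
Qed.

Lemma homog_prod_sub_unit_set k r :
  N (g^-1 * k)%g -> setmul m (T k) (T k^-1%g) r -> unit_set r.
Proof.
move=> gk Pr; split; last exact: setmul_homog_inv_sub Pr.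
by apply: setmul_mono Pr => a; apply: induced_homog; last apply: coset_inv.
Qed.

Lemma local_set_right_unit z : local_set z -> exists2 e, unit_set e & m z e = z.
Proof.
move=> [k gk Pz]; have [[r [Pr zr]] _] := (epsT k).2 z Pz.
by exists r; [apply: homog_prod_sub_unit_set Pr | rewrite -zr].
Qed.

Lemma local_set_left_unit z : local_set z -> exists2 e, unit_set e & m e z = z.
Proof.
move=> [k gk Pz]; have [_ [r [Pr zr]]] := (epsT k).2 z Pz.
by exists r; [apply: homog_prod_sub_unit_set Pr | rewrite -zr].
Qed.

Lemma prod_set_sub_right_local x : prod_set x -> setmul m (fun _ => True) local_set x.
Proof.
move: x; apply: setmul_ind; [exact: setmul0 | exact: setmulD |].
move=> a b _ Ub; apply: (setmul_mull_closed ringS (C := fun _ => True)) => //.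
move: b Ub; apply: induced_ind; [exact: setmul0 | exact: setmulD |].
move=> l t gl /homog_sub_triple/(setmulA_sub ringS); apply: setmul_mono => // z Pz.
by exists l^-1%g; [have := coset_inv gl; rewrite invgK | rewrite invgK].
Qed.

Lemma prod_set_sub_left_local x : prod_set x -> setmul m local_set (fun _ => True) x.
Proof.
move: x; apply: setmul_ind; [exact: setmul0 | exact: setmulD |].
move=> a b Ua _; apply: (setmul_mulr_closed ringS (C := fun _ => True)) => //.
move: a Ua; apply: induced_ind; [exact: setmul0 | exact: setmulD |].
by move=> k t gk /homog_sub_triple; apply: setmul_mono => // z Pz; exists k.
Qed.

Lemma induced_s_unital : s_unital m prod_set.
Proof.
move=> x Rx; split.
  have [e [Re _] xe] := setmul_right_unit ringS
    (common_right_unit ringS unit_set0 unit_set_circle_r local_set_subr local_set_right_unit)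
    (prod_set_sub_right_local Rx).
  by exists e; rewrite xe.
have [e [Re _] ex] := setmul_left_unit ringS
  (common_left_unit ringS unit_set0 unit_set_circle_l local_set_subl local_set_left_unit)
  (prod_set_sub_left_local Rx).
by exists e; rewrite ex.
Qed.

End Units.

End InducedGrading.

Theorem proposition5p8 (G : groupType) (N : G -> Prop)
    (S : zmodType) (m : S -> S -> S) (T : G -> S -> Prop) :
  is_nonunital_ring m ->
  is_normal_subgroup N ->
  nearly_eps_strong m T ->
  nearly_eps_strong_family (@inv G) m (induced_component T N).
Proof.
move=> ringS normalN [gradedT epsT] g; split.
  exact: induced_triple_product.
exact: induced_s_unital.
Qed.
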